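(* Let $(F,\Gamma)$ be a matched pair of finite groups with actions $\triangleleft:\Gamma\times F\to\Gamma$, $\triangleright:\Gamma\times F\to F$, and let $H=k^\Gamma\,{}^{\tau}\#_{\sigma}kF$ be a bicrossed product Hopf algebra fitting into the abelian exact sequence $k\to k^\Gamma\to H\to kF\to k$. Then this exact sequence induces by restriction an exact sequence of groups $1\to\widehat\Gamma\to G(H)\to F_0\to 1$, where $F_0=\{x\in F^\Gamma:\ [\tau_x]=1\}$ and $F^\Gamma\subseteq F$ is the subgroup of elements fixed by the action $\triangleright$.
   Context: $k$ is an algebraically closed field of characteristic zero. The bicrossed product is given by normalized compatible $2$-cocycles $\sigma:F\times F\to(k^\Gamma)^\times$, $\sigma(x,y)=\sum_s\sigma_s(x,y)e_s$, and $\tau:\Gamma\times\Gamma\to(k^F)^\times$, $\tau(s,t)=\sum_x\tau_x(s,t)e_x$ ($e_s,e_x$ the canonical idempotents), with multiplication $(e_s\#x)(e_t\#y)=\delta_{s\triangleleft x,t}\sigma_s(x,y)e_s\#xy$ and comultiplication $\Delta(e_s\#x)=\sum_{gh=s}\tau_x(g,h)\,e_g\#(h\triangleright x)\otimes e_h\#x$. For $x\in F^\Gamma$, $\tau_x:\Gamma\times\Gamma\to k^\times$ is a normalized $2$-cocycle and $[\tau_x]$ is its class in $H^2(\Gamma,k^\times)$. $G(H)$ is the group of group-likes of $H$ and $\widehat\Gamma=G(k^\Gamma)$ the group of characters of $\Gamma$. *)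

From HB Require Import structures.
From mathcomp Require Import all_boot all_order all_algebra all_fingroup.
Set Implicit Arguments. Unset Strict Implicit. Unset Printing Implicit Defensive.
Import GRing.Theory.
Local Open Scope ring_scope.

Section Bicrossed.
Variables (k : fieldType) (F Gm : finGroupType).
(* Gm plays the role of Gamma.
   ra s x = s <| x  (right action of F on Gamma),
   la s x = s |> x  (left action of Gamma on F). *)
Variables (ra : Gm -> F -> Gm) (la : Gm -> F -> F).
(* sig s x y = sigma_s(x,y) ; tau x s t = tau_x(s,t) *)
Variables (sig : Gm -> F -> F -> k) (tau : F -> Gm -> Gm -> k).

Definition matched_pair : Prop :=
  [/\ (forall s, ra s 1%g = s) /\ (forall s x y, ra s (x * y)%g = ra (ra s x) y),
      forall x, la 1%g x = x,
      forall s t x, la (s * t)%g x = la s (la t x),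
      forall s x y, la s (x * y)%g = (la s x * la (ra s x) y)%g
    & forall s t x, ra (s * t)%g x = (ra s (la t x) * ra t x)%g].

(* Normalized compatible 2-cocycles: exactly the conditions making the
   bicrossed product below a bialgebra (unital, associative, counital,
   coassociative, Delta and epsilon multiplicative). *)
Definition compatible_cocycles : Prop :=
  [/\ (forall s x y, sig s x y != 0) /\ (forall x s t, tau x s t != 0),
      (forall s x, sig s 1%g x = 1 /\ sig s x 1%g = 1) /\
      (forall x s, tau x 1%g s = 1 /\ tau x s 1%g = 1),
      (forall s x y z,
          sig (ra s x) y z * sig s x (y * z)%g = sig s x y * sig s (x * y)%g z),
      (forall x a b c,
          tau x (a * b)%g c * tau (la c x) a b = tau x a (b * c)%g * tau x b c)
    & (forall g h x y,
          sig (g * h)%g x y * tau (x * y)%g g h =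
          tau x g h * tau y (ra g (la h x)) (ra h x)
          * sig g (la h x) (la (ra h x) y) * sig h x y)].

(* Elements of H = k^Gamma ^tau#_sigma kF : a (s,x) is the coefficient of e_s # x. *)
Definition Hel := {ffun Gm * F -> k}.

(* (e_s#x)(e_t#y) = delta_{s<|x,t} sigma_s(x,y) e_s#xy *)
Definition bc_mul (a b : Hel) : Hel :=
  [ffun p => \sum_(x : F) a (p.1, x) * b (ra p.1 x, (x^-1 * p.2)%g)
                           * sig p.1 x (x^-1 * p.2)%g].

(* H (x) H identified with functions on (Gamma x F) x (Gamma x F). *)
Definition bc_comul (a : Hel) : {ffun (Gm * F) * (Gm * F) -> k} :=
  [ffun q => if q.1.2 == la q.2.1 q.2.2
             then a ((q.1.1 * q.2.1)%g, q.2.2) * tau q.2.2 q.1.1 q.2.1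
             else 0].

Definition bc_tensor (a b : Hel) : {ffun (Gm * F) * (Gm * F) -> k} :=
  [ffun q => a q.1 * b q.2].

(* epsilon(e_s#x) = delta_{s,1} *)
Definition bc_counit (a : Hel) : k := \sum_(x : F) a (1%g, x).

Definition grouplike (a : Hel) : Prop :=
  bc_comul a = bc_tensor a a /\ bc_counit a = 1.

Definition bc_iota (chi : {ffun Gm -> k}) : Hel :=
  [ffun p => if p.2 == 1%g then chi p.1 else 0].

(* H -> kF, e_s # x |-> delta_{s,1} x ; kF elements as coefficient functions *)
Definition bc_pi (a : Hel) : {ffun F -> k} := [ffun x => a (1%g, x)].

Definition delta_el (x : F) : {ffun F -> k} := [ffun y => (y == x)%:R].

(* characters of Gamma = group-likes of k^Gamma *)
Definition character (chi : {ffun Gm -> k}) : Prop :=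
  chi 1%g = 1 /\ forall s t, chi (s * t)%g = chi s * chi t.

Definition coh_trivial (f : Gm -> Gm -> k) : Prop :=
  exists mu : Gm -> k, (forall s, mu s != 0) /\
    forall s t, f s t = mu s * mu t / mu (s * t)%g.

Definition F0 (x : F) : Prop :=
  (forall s, la s x = x) /\ coh_trivial (tau x).

End Bicrossed.

Arguments bc_iota {k} F {Gm} chi.
Arguments delta_el {k F} x%_group_scope.

From HB Require Import structures.
From mathcomp Require Import all_boot all_order all_algebra all_fingroup.
Set Implicit Arguments. Unset Strict Implicit. Unset Printing Implicit Defensive.
Import GRing.Theory.
Local Open Scope ring_scope.

(* Comparing coefficients of Delta g = g (x) g at e_s#x (x) e_1#y and at
   e_1#x (x) e_1#y shows that a group-like g is supported on a single column
   Gamma x {x} with g(e_1#x) = 1; the coefficients at e_s#x (x) e_t#x then say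
   that x is fixed by the action and that tau_x is the coboundary of
   mu s := g(e_s#x).  Conversely, every such column element
   [bc_line x mu] is group-like, and for x = 1 these are exactly the images of
   the characters of Gamma. *)

Lemma idemf_eq1 (R : idomainType) (a : R) : a != 0 -> a * a = a -> a = 1.
Proof. by move=> a_neq0 aa; apply: (mulfI a_neq0); rewrite mulr1. Qed.

Section BicrossedGrouplikes.
Variables (k : fieldType) (F Gm : finGroupType).
Variables (ra : Gm -> F -> Gm) (la : Gm -> F -> F).
Variables (sig : Gm -> F -> F -> k) (tau : F -> Gm -> Gm -> k).
Hypothesis mp : matched_pair ra la.
Hypothesis cc : compatible_cocycles ra la sig tau.

Let ra_s1 s : ra s 1%g = s. Proof. by case: mp => [[]]. Qed.
Let la_1x x : la 1%g x = x. Proof. by case: mp. Qed.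
Let sig_neq0 s x y : sig s x y != 0. Proof. by case: cc => [[]]. Qed.
Let tau_neq0 x s t : tau x s t != 0. Proof. by case: cc => [[]]. Qed.
Let sig_1x s x : sig s 1%g x = 1. Proof. by case: cc => _ [/(_ s x) []]. Qed.
Let tau_1s x s : tau x 1%g s = 1. Proof. by case: cc => _ [_ /(_ x s) []]. Qed.
Let tau_s1 x s : tau x s 1%g = 1. Proof. by case: cc => _ [_ /(_ x s) []]. Qed.

Lemma la_s1 s : la s 1%g = 1%g.
Proof.
case: mp => _ _ _ la_sM _; have := la_sM s 1%g 1%g.
rewrite mulg1 ra_s1 => idem.
by apply: (mulgI (la s 1%g)); rewrite -idem mulg1.
Qed.

Lemma ra_1x x : ra 1%g x = 1%g.
Proof.
case: mp => _ _ _ _ ra_Mx; have := ra_Mx 1%g 1%g x.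
rewrite mulg1 la_1x => idem.
by apply: (mulgI (ra 1%g x)); rewrite -idem mulg1.
Qed.

Lemma tau1 s t : tau 1%g s t = 1.
Proof.
case: cc => _ _ _ _ /(_ s t 1%g 1%g).
rewrite mulg1 !la_s1 !ra_s1 !sig_1x !mulr1 mul1r.
by move=> /esym; exact: idemf_eq1 (tau_neq0 _ _ _).
Qed.

Lemma sig1 x y : sig 1%g x y = 1.
Proof.
case: cc => _ _ _ _ /(_ 1%g 1%g x y).
rewrite mulg1 !la_1x !ra_1x !tau_1s !la_1x mulr1 !mul1r.
by move=> /esym; exact: idemf_eq1 (sig_neq0 _ _ _).
Qed.

Definition bc_line (x : F) (mu : Gm -> k) : Hel k F Gm :=
  [ffun p => if p.2 == x then mu p.1 else 0].

Lemma bc_iota_line (chi : {ffun Gm -> k}) : bc_iota F chi = bc_line 1%g chi.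
Proof. by []. Qed.

Lemma bc_pi_line x mu : mu 1%g = 1 -> bc_pi (bc_line x mu) = delta_el x.
Proof. by move=> mu1; apply/ffunP => y; rewrite !ffunE /=; case: eqP. Qed.

Lemma grouplike_line x (mu : Gm -> k) :
    (forall s, la s x = x) -> mu 1%g = 1 ->
    (forall s t, mu (s * t)%g * tau x s t = mu s * mu t) ->
  grouplike la tau (bc_line x mu).
Proof.
move=> x_fixed mu1 tau_mu; split.
  apply/ffunP => -[[s y] [t z]]; rewrite !ffunE /=.
  have [->|z_neq_x] := eqVneq z x; last by rewrite mul0r mulr0; case: ifP.
  by rewrite x_fixed; case: (y == x); rewrite ?mul0r.
rewrite /bc_counit (bigD1 x) //= ffunE /= eqxx mu1 big1 ?addr0 // => y /negPf.
by rewrite ffunE /= => ->.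
Qed.

Lemma bc_iota_inj : injective (bc_iota F : {ffun Gm -> k} -> Hel k F Gm).
Proof.
move=> chi psi /ffunP eq_iota; apply/ffunP => s.
by have := eq_iota (s, 1%g); rewrite !ffunE eqxx.
Qed.

Lemma bc_iota_mul (chi psi : {ffun Gm -> k}) :
  bc_iota F [ffun s => chi s * psi s]
  = bc_mul ra sig (bc_iota F chi) (bc_iota F psi).
Proof.
apply/ffunP => -[s z]; rewrite !ffunE /=.
rewrite (bigD1 1%g) //= big1 ?addr0 => [|y /negPf y_neq1]; last first.
  by rewrite !ffunE /= y_neq1 !mul0r.
rewrite !ffunE /= eqxx invg1 mul1g ra_s1 sig_1x mulr1.
by case: ifP; rewrite ?mul0r ?mulr0.
Qed.

Lemma bc_pi_mul (g h : Hel k F Gm) x y :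
    bc_pi g = delta_el x -> bc_pi h = delta_el y ->
  bc_pi (bc_mul ra sig g h) = delta_el (x * y)%g.
Proof.
move=> /ffunP pi_g /ffunP pi_h; apply/ffunP => z; rewrite !ffunE /=.
have g1 w : g (1%g, w) = (w == x)%:R by have := pi_g w; rewrite !ffunE.
have h1 w : h (1%g, w) = (w == y)%:R by have := pi_h w; rewrite !ffunE.
under eq_bigr => w _ do rewrite ra_1x sig1 mulr1 g1 h1.
rewrite (bigD1 x) //= big1 ?addr0 => [|w /negPf ->]; last by rewrite mul0r.
by rewrite eqxx mul1r -(inj_eq (mulgI x)) mulKVg.
Qed.

Section Grouplike.
Variable g : Hel k F Gm.
Hypothesis g_grouplike : grouplike la tau g.

Lemma grouplike_coef s y t z :
  (if y == la t z then g ((s * t)%g, z) * tau z s t else 0) = g (s, y) * g (t, z).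
Proof. by case: g_grouplike => /ffunP/(_ ((s, y), (t, z))); rewrite !ffunE. Qed.

Lemma grouplike_pi : exists2 x, g (1%g, x) = 1 & bc_pi g = delta_el x.
Proof.
have coef1 y z : (if z == y then g (1%g, y) else 0) = g (1%g, z) * g (1%g, y).
  by have := grouplike_coef 1%g z 1%g y; rewrite la_1x mulg1 tau_1s mulr1.
have [x gx_neq0] : exists x, g (1%g, x) != 0.
  apply/existsP/contraT; rewrite negb_exists => /forallP g1_eq0.
  case: g_grouplike => _.
  rewrite /bc_counit big1 => [/eqP|y _]; first by rewrite eq_sym oner_eq0.
  exact/eqP/negPn/g1_eq0.
have gx1 : g (1%g, x) = 1.
  by apply: idemf_eq1 gx_neq0 _; rewrite -coef1 eqxx.
exists x => //; apply/ffunP => y; rewrite !ffunE.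
have [->|y_neq_x] := eqVneq y x; first by rewrite gx1.
apply/eqP; have := coef1 x y; rewrite (negPf y_neq_x) => /esym/eqP.
by rewrite mulf_eq0 (negPf gx_neq0) orbF.
Qed.

Variable x : F.
Hypothesis gx1 : g (1%g, x) = 1.

Lemma grouplike_lineE : g = bc_line x (fun s => g (s, x)).
Proof.
apply/ffunP => -[s z]; rewrite ffunE /=.
by have := grouplike_coef s z 1%g x; rewrite la_1x mulg1 tau_s1 mulr1 gx1 mulr1.
Qed.

Lemma grouplike_fixed s : la s x = x.
Proof.
apply/eqP; apply: contraT => x_moved.
have := grouplike_coef s^-1%g (la s x) s x.
rewrite eqxx mulVg gx1 mul1r grouplike_lineE !ffunE /= (negPf x_moved) mul0r.
by move/eqP; rewrite (negPf (tau_neq0 _ _ _)).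
Qed.

Lemma grouplike_tau s t :
  g ((s * t)%g, x) * tau x s t = g (s, x) * g (t, x).
Proof. by have := grouplike_coef s x t x; rewrite grouplike_fixed eqxx. Qed.

Lemma grouplike_neq0 s : g (s, x) != 0.
Proof.
have := grouplike_tau s^-1%g s; rewrite mulVg gx1 mul1r => tau_eq.
by apply: contra_neq (tau_neq0 x s^-1%g s) => gs0; rewrite tau_eq gs0 mulr0.
Qed.

Lemma grouplike_F0 : F0 la tau x.
Proof.
split; first exact: grouplike_fixed.
exists (fun s => g (s, x)); split=> [|s t]; first exact: grouplike_neq0.
by rewrite -grouplike_tau mulrAC divff ?mul1r ?grouplike_neq0.
Qed.

End Grouplike.

Lemma F0_grouplike x :
  F0 la tau x -> exists2 g, grouplike la tau g & bc_pi g = delta_el x.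
Proof.
case=> x_fixed [mu [mu_neq0 tau_mu]].
have mu1 : mu 1%g = 1.
  by have := tau_mu 1%g 1%g; rewrite tau_1s mulg1 mulfK // => /esym.
exists (bc_line x mu); last exact: bc_pi_line.
by apply: grouplike_line => // s t; rewrite tau_mu mulrC divfK.
Qed.

Lemma character_grouplike (chi : {ffun Gm -> k}) :
  character chi -> grouplike la tau (bc_iota F chi).
Proof.
case=> chi1 chiM; rewrite bc_iota_line.
by apply: grouplike_line => // [s|s t]; rewrite ?la_s1 // tau1 mulr1 chiM.
Qed.

Lemma grouplike_pi_delta1 g : grouplike la tau g ->
  bc_pi g = delta_el 1%g <->
  exists2 chi : {ffun Gm -> k}, character chi & g = bc_iota F chi.
Proof.
move=> g_grouplike; split=> [/ffunP pi_g | [chi [chi1 _] ->]]; last first.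
  exact: bc_pi_line.
have g11 : g (1%g, 1%g) = 1 by have := pi_g 1%g; rewrite !ffunE eqxx.
exists [ffun s => g (s, 1%g)].
  split=> [|s t]; rewrite !ffunE //.
  by rewrite -(grouplike_tau g_grouplike g11) tau1 mulr1.
rewrite {1}(grouplike_lineE g_grouplike g11).
by apply/ffunP => -[s z]; rewrite !ffunE.
Qed.

End BicrossedGrouplikes.

Theorem lemma2p2 (k : closedFieldType) (F Gm : finGroupType)
    (ra : Gm -> F -> Gm) (la : Gm -> F -> F)
    (sig : Gm -> F -> F -> k) (tau : F -> Gm -> Gm -> k) :
  [pchar k] =i pred0 ->
  matched_pair ra la ->
  compatible_cocycles ra la sig tau ->
  [/\ (* iota restricts to a map hat(Gamma) -> G(H) ... *)
      (forall chi : {ffun Gm -> k}, character chi -> grouplike la tau (bc_iota F chi)) /\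
      (* ... which is a group homomorphism ... *)
      (forall chi psi : {ffun Gm -> k}, character chi -> character psi ->
         bc_iota F [ffun s => chi s * psi s]
         = bc_mul ra sig (bc_iota F chi) (bc_iota F psi)),
      (* ... and injective *)
      (forall chi psi : {ffun Gm -> k}, character chi -> character psi ->
         bc_iota F chi = bc_iota F psi -> chi = psi),
      (* pi restricts to a map G(H) -> F_0 ... *)
      (forall g, grouplike la tau g -> exists2 x, F0 la tau x & bc_pi g = delta_el x) /\
      (* ... which is a group homomorphism ... *)
      (forall g h x y, grouplike la tau g -> grouplike la tau h ->
         bc_pi g = delta_el x -> bc_pi h = delta_el y ->
         bc_pi (bc_mul ra sig g h) = delta_el (x * y)%g),
      (* ... and surjective onto F_0 ... *)
      (forall x, F0 la tau x -> exists2 g, grouplike la tau g & bc_pi g = delta_el x)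
    & (* ... with kernel the image of hat(Gamma) *)
      (forall g, grouplike la tau g ->
         (bc_pi g = delta_el 1%g <-> exists2 chi : {ffun Gm -> k}, character chi & g = bc_iota F chi))].
Proof.
move=> _ mp cc; split.
- split=> [chi | chi psi _ _]; first exact: (character_grouplike mp cc).
  exact: (bc_iota_mul mp cc chi psi).
- by move=> chi psi _ _ /bc_iota_inj.
- split=> [g g_grouplike | g h x y _ _]; last exact: (bc_pi_mul mp cc).
  have [x gx1 pi_g] := grouplike_pi mp cc g_grouplike.
  by exists x => //; exact: (grouplike_F0 mp cc g_grouplike gx1).
- exact: (F0_grouplike cc).
- exact: (grouplike_pi_delta1 mp cc).
Qed.
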